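(* Let $Y$ be a Young diagram with row lengths $a_1\ge\cdots\ge a_m\ge0$ and let $Q\subseteq C\times S$. Then there exists a 2-cover $P$ of $H(Y)$ with $P\cap(C\times S)=Q$ and $$\tau^{(2)}(H(Y))\le |P|=|Q|+\sum_{i=1}^m \nu(a_i,Q).$$
   Context: $H(Y)$ is the hypergraph with vertex sides $R=\{r_1,\dots,r_m\}$, $C=\{c_1,\dots,c_{a_1}\}$, $S=\{s_1,\dots,s_{a_1}\}$ and edges $\{r_i,c_j,s_k\}$ for $1\le i\le m$, $1\le j,k\le a_i$. For disjoint sets $A,B$, $A\times B$ denotes the set of pairs $\{a,b\}$, $a\in A$, $b\in B$. A 2-cover of $H(Y)$ is a set of pairs of vertices such that every edge contains some pair of the set; $\tau^{(2)}(H(Y))$ is the minimum size of a 2-cover. $\nu(\ell,Q)$ is the matching number of the bipartite graph with sides $\{c_1,\dots,c_\ell\}$, $\{s_1,\dots,s_\ell\}$ and edges $\{c_js_k:1\le j,k\le\ell\}\setminus Q$. *)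

From mathcomp Require Import all_boot.
Set Implicit Arguments. Unset Strict Implicit. Unset Printing Implicit Defensive.

(* Vertices of H(Y): R = {r_1..r_m} = 'I_m, C = {c_1..c_n}, S = {s_1..s_n}
   with n = a_1 (indices shifted to start at 0). *)
Notation vert m n := ('I_m + ('I_n + 'I_n))%type.

(* a_1 = max row length (= a_1 for nonincreasing a; 0 if m = 0) *)
Definition a1 (m : nat) (a : 'I_m -> nat) : nat := \max_(i < m) a i.

Section HY.
Variables (m n : nat).
Local Notation V := (vert m n).

Definition rv (i : 'I_m) : V := inl i.
Definition cv (j : 'I_n) : V := inr (inl j).
Definition sv (k : 'I_n) : V := inr (inr k).

Definition CxS : {set {set V}} :=
  [set p : {set V} | [exists j : 'I_n, exists k : 'I_n, p == [set cv j; sv k]]].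

Definition is_edge (a : 'I_m -> nat) (e : {set V}) : bool :=
  [exists i : 'I_m, exists j : 'I_n, exists k : 'I_n,
     [&& j < a i, k < a i & e == [set rv i; cv j; sv k]]].

Definition two_cover (a : 'I_m -> nat) (P : {set {set V}}) : bool :=
  [forall p in P, #|p| == 2] &&
  [forall e : {set V}, is_edge a e ==> [exists p in P, p \subset e]].

(* tau^(2)(H(Y)): minimum size of a 2-cover (the set of all pairs is a
   2-cover, so its size is a valid initial bound for the minimum) *)
Definition tau2 (a : 'I_m -> nat) : nat :=
  \big[minn/#|[set p : {set V} | #|p| == 2]|]_(P : {set {set V}} | two_cover a P) #|P|.

Definition bip_edges (l : nat) (Q : {set {set V}}) : {set {set V}} :=
  [set p : {set V} | [exists j : 'I_n, exists k : 'I_n,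
      [&& j < l, k < l & p == [set cv j; sv k]]]] :\: Q.

Definition is_matching (E M : {set {set V}}) : bool :=
  (M \subset E) &&
  [forall e in M, forall f in M, (e != f) ==> [disjoint e & f]].

Definition nu (l : nat) (Q : {set {set V}}) : nat :=
  \max_(M : {set {set V}} | is_matching (bip_edges l Q) M) #|M|.

End HY.
Arguments two_cover : clear implicits.
Arguments tau2 : clear implicits.
Arguments nu : clear implicits.

(* For each row i, the pairs c_j s_k outside Q with j, k < a_i form a
   bipartite graph G_i, and by Konig's theorem it has a vertex cover W_i of
   size nu(a_i, Q).  Then Q together with the pairs r_i w, w in W_i, is a
   2-cover: an edge {r_i, c_j, s_k} either contains a pair of Q, or c_j s_k is
   an edge of G_i and r_i c_j or r_i s_k is one of the new pairs.  The new
   pairs contain a vertex of R, so they are distinct from the pairs of Q and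
   from each other, and |P| = |Q| + sum_i nu(a_i, Q).
   Konig's theorem is derived from Hall's theorem applied on both sides of a
   set S of maximal deficiency |S| - |N(S)|. *)

From HB Require Import structures.
From mathcomp Require Import all_boot zify.
Set Implicit Arguments. Unset Strict Implicit. Unset Printing Implicit Defensive.

Lemma cardsU_disjoint (T : finType) (C D : {set T}) :
  [disjoint C & D] -> #|C :|: D| = #|C| + #|D|.
Proof. by move=> dCD; apply/eqP; rewrite (leq_card_setU C D).2. Qed.

(* MathComp has no commutative-law instance for [minn]; [bigD1] needs one. *)
#[local] HB.instance Definition _ := SemiGroup.isComLaw.Build nat minn minnA minnC.

Lemma bigminn_le_cond (I : finType) (P : pred I) (F : I -> nat) x i0 :
  P i0 -> \big[minn/x]_(i | P i) F i <= F i0.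
Proof. by move=> Pi0; rewrite (bigD1 i0) //= geq_minl. Qed.

Lemma card_disjoint_family_le (T : finType) (M : {set {set T}}) (W : {set T}) :
  {in M &, forall e f : {set T}, e != f -> [disjoint e & f]} ->
  {in M, forall e : {set T}, e :&: W != set0} -> #|M| <= #|W|.
Proof.
move=> dM hitW; pose h e := [pick v in e :&: W].
have hW e : e \in M -> exists2 v, h e = Some v & v \in e :&: W.
  move=> eM; rewrite /h; case: pickP => [v|none]; first by exists v.
  by case/set0Pn: (hitW e eM) => v; rewrite (none v).
have h_inj : {in M &, injective h}.
  move=> e f eM fM; have [v -> /setIP[ve _]] := hW e eM.
  have [w -> /setIP[wf _]] := hW f fM; case=> vw; rewrite -vw in wf.
  by case: (eqVneq e f) => // /(dM e f eM fM)/disjointFr/(_ ve); rewrite wf.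
rewrite -(card_in_imset h_inj) -(card_imset W (@Some_inj _)).
apply/subset_leq_card/subsetP => _ /imsetP[e eM ->].
by have [v -> /setIP[_ vW]] := hW e eM; apply: imset_f.
Qed.

(** * Hall's theorem *)

Section Hall.
Variables (A B : finType) (E : A -> B -> bool).
Implicit Types (X T U : {set A}) (Y Z : {set B}) (f g : A -> B).

Definition neighbours (Y : {set B}) (T : {set A}) : {set B} :=
  [set b in Y | [exists a in T, E a b]].

Definition hall_condition (X : {set A}) (Y : {set B}) : Prop :=
  forall T : {set A}, T \subset X -> #|T| <= #|neighbours Y T|.

Definition matches_into (X : {set A}) (Y : {set B}) (f : A -> B) : Prop :=
  [/\ {in X &, injective f}, {in X, forall a, f a \in Y}
    & {in X, forall a, E a (f a)}].

Lemma neighboursU Y T U :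
  neighbours Y (T :|: U) = neighbours Y T :|: neighbours Y U.
Proof.
apply/setP => b; rewrite !inE -andb_orr; congr (_ && _).
apply/exists_inP/orP => [[a /setUP[aT|aU] Eab]|[]/exists_inP[a aTU Eab]].
- by left; apply/exists_inP; exists a.
- by right; apply/exists_inP; exists a.
- by exists a; rewrite // inE aTU.
- by exists a; rewrite // inE aTU orbT.
Qed.

Lemma neighbours_restrict Y T U :
  U \subset T -> neighbours (neighbours Y T) U = neighbours Y U.
Proof.
move=> sUT; apply/setP => b; rewrite !inE; case: (b \in Y) => //=.
case: (boolP [exists a in U, E a b]) => [/exists_inP[a aU Eab]|];
  last by rewrite andbF.
by rewrite andbT; apply/exists_inP; exists a; rewrite ?(subsetP sUT).
Qed.

Lemma neighbours_setD Y Z U :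
  neighbours Y U \subset neighbours (Y :\: Z) U :|: Z.
Proof.
by apply/subsetP => b; rewrite !inE; case: (b \in Z); rewrite ?orbT ?orbF.
Qed.

Lemma neighbours_subset Y T : neighbours Y T \subset Y.
Proof. by apply/subsetP => b; rewrite inE => /andP[]. Qed.

Lemma matches_intoU X1 X2 Y1 Y2 f g :
  [disjoint Y1 & Y2] -> matches_into X1 Y1 f -> matches_into X2 Y2 g ->
  matches_into (X1 :|: X2) (Y1 :|: Y2) (fun a => if a \in X1 then f a else g a).
Proof.
move=> dY [finj fY fE] [ginj gY gE].
have X2P a : a \in X1 :|: X2 -> a \notin X1 -> a \in X2.
  by rewrite inE => /orP[->|].
have split_Y a1 a2 : a1 \in X1 -> a2 \in X2 -> f a1 != g a2.
  move=> a1X a2X; apply: contraTneq dY => eq_fg.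
  by apply/pred0Pn; exists (f a1); rewrite /= fY // eq_fg gY.
split=> [a1 a2 a1X a2X|a aX|a aX].
- case: (boolP (a1 \in X1)) => a1X1; case: (boolP (a2 \in X1)) => a2X2.
  + exact: finj.
  + by move/eqP; rewrite (negbTE (split_Y _ _ a1X1 (X2P _ a2X a2X2))).
  + by move/esym/eqP; rewrite (negbTE (split_Y _ _ a2X2 (X2P _ a1X a1X1))).
  + by apply: ginj; apply: X2P.
- case: (boolP (a \in X1)) => aX1; first by rewrite inE fY.
  by rewrite inE gY ?orbT ?X2P.
- by case: (boolP (a \in X1)) => aX1; [apply: fE | apply: gE; apply: X2P].
Qed.

Lemma matches_into_widen X Y Y' f :
  Y \subset Y' -> matches_into X Y f -> matches_into X Y' f.
Proof. by move=> sYY' [finj fY fE]; split=> // a /fY /(subsetP sYY'). Qed.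

Variable b0 : B.

Section Step.
Variables (X : {set A}) (Y : {set B}).
Hypothesis hallXY : hall_condition X Y.
Hypothesis hall_smaller : forall X' Y', #|X'| < #|X| ->
  hall_condition X' Y' -> exists f, matches_into X' Y' f.

Lemma hall_tight T :
  T \subset X -> T != set0 -> T != X -> #|neighbours Y T| <= #|T| ->
  exists f, matches_into X Y f.
Proof.
move=> sTX T0 TX tightT; set Z := neighbours Y T; rewrite -/Z in tightT.
have [f fM] : exists f, matches_into T Z f.
  apply: hall_smaller; first by rewrite proper_card // properEneq TX.
  by move=> U sUT; rewrite neighbours_restrict ?hallXY ?(subset_trans sUT).
have [g gM] : exists g, matches_into (X :\: T) (Y :\: Z) g.
  apply: hall_smaller.
    have := subset_leq_card sTX; rewrite -card_gt0 in T0.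
    by rewrite cardsD (setIidPr sTX); lia.
  move=> U sUXT.
  have dUT : [disjoint U & T].
    by rewrite disjoints_subset (subset_trans sUXT) ?subsetDr.
  have sUTX : U :|: T \subset X.
    by rewrite subUset sTX (subset_trans sUXT) ?subsetDl.
  have NUT : #|neighbours Y (U :|: T)| <= #|neighbours (Y :\: Z) U| + #|Z|.
    rewrite neighboursU; apply: leq_trans (leq_card_setU _ _).1.
    by apply: subset_leq_card; rewrite subUset neighbours_setD subsetUr.
  by have := hallXY sUTX; rewrite cardsU_disjoint //; lia.
exists (fun a => if a \in T then f a else g a).
have -> : X = T :|: (X :\: T) by rewrite setDE setUIr setUCr setIT (setUidPr sTX).
apply: matches_into_widen (matches_intoU _ fM gM).
  by rewrite subUset neighbours_subset subsetDl.
by rewrite disjoint_sym disjoints_subset subsetDr.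
Qed.

Lemma hall_surplus x :
  x \in X ->
  (forall T, T \subset X -> T != set0 -> T != X -> #|T| < #|neighbours Y T|) ->
  exists f, matches_into X Y f.
Proof.
move=> xX surplus.
have /set0Pn[y] : neighbours Y [set x] != set0.
  by rewrite -card_gt0 (leq_trans _ (hallXY _)) ?cards1 ?sub1set.
rewrite !inE => /andP[yY /exists_inP[_ /set1P-> Exy]].
have [g gM] : exists g, matches_into (X :\ x) (Y :\ y) g.
  apply: hall_smaller; first by rewrite (cardsD1 x X) xX.
  move=> U sUX; have [->|U0] := eqVneq U set0; first by rewrite cards0.
  have UX : U != X.
    by apply: contraTneq sUX => ->; apply/subsetPn; exists x; rewrite // !inE eqxx.
  have NU : #|neighbours Y U| <= #|neighbours (Y :\ y) U| + #|[set y]|.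
    apply: leq_trans (leq_card_setU _ _).1.
    exact/subset_leq_card/neighbours_setD.
  have := surplus U (subset_trans sUX (subsetDl _ _)) U0 UX.
  by rewrite cards1 in NU; lia.
rewrite -(setD1K xX); exists (fun a => if a \in [set x] then y else g a).
apply: matches_into_widen (matches_intoU (Y1 := [set y]) _ _ gM).
  by rewrite setD1K.
- by rewrite disjoints1 !inE eqxx.
- by split=> [a1 a2 /set1P-> /set1P->|a _|a /set1P->]; rewrite ?set11.
Qed.
End Step.

Lemma hall X Y : hall_condition X Y -> exists f, matches_into X Y f.
Proof.
have [k] := ubnP #|X|; elim: k X Y => // k IH X Y ltXk hallXY.
have [->|[x xX]] := set_0Vmem X.
  by exists (fun=> b0); split=> [a ?|a|a]; rewrite inE.
have hall_smaller X' Y' :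
    #|X'| < #|X| -> hall_condition X' Y' -> exists f, matches_into X' Y' f.
  by move=> ltX'X; apply: IH; apply: leq_trans ltX'X _.
have [/existsP[T /and4P[sTX T0 TX tightT]]|/existsPn surplus] := boolP
  [exists T : {set A},
     [&& T \subset X, T != set0, T != X & #|neighbours Y T| <= #|T|]].
  exact: hall_tight hallXY hall_smaller T sTX T0 TX tightT.
apply: hall_surplus hallXY hall_smaller x xX _ => T sTX T0 TX.
by move: (surplus T); rewrite sTX T0 TX ltnNge.
Qed.
End Hall.

(** * Konig's theorem *)

Section Konig.
Variables (A B : finType) (E : A -> B -> bool).
Implicit Types (S T : {set A}).

Definition vertex_cover (WA : {set A}) (WB : {set B}) : Prop :=
  forall a b, E a b -> (a \in WA) || (b \in WB).

Definition matching (M : {set A * B}) : Prop :=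
  [/\ {in M, forall p, E p.1 p.2}, {in M &, injective (@fst A B)}
    & {in M &, injective (@snd A B)}].

Section GraphJoin.
Variables (X1 X2 : {set A}) (Y1 Y2 : {set B}) (f : A -> B) (g : B -> A).
Hypotheses (dX : [disjoint X1 & X2]) (dY : [disjoint Y1 & Y2]).
Hypotheses (fM : matches_into E X1 Y1 f)
           (gM : matches_into (fun b a => E a b) Y2 X2 g).

Definition graph_join : {set A * B} :=
  [set (a, f a) | a in X1] :|: [set (g b, b) | b in Y2].

Lemma matching_graph_join : matching graph_join.
Proof.
have [finj fY fE] := fM; have [ginj gX gE] := gM.
split=> [p|p q|p q]; first by case/setUP=> /imsetP[c cX ->]; [apply: fE|apply: gE].
- case/setUP=> /imsetP[a aX ->]; case/setUP=> /imsetP[b bY ->] /= eq_ab.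
  + by rewrite eq_ab.
  + by move: (gX b bY); rewrite -eq_ab (disjointFr dX aX).
  + by move: (gX a aX); rewrite eq_ab (disjointFr dX bY).
  + by rewrite (ginj a b).
- case/setUP=> /imsetP[a aX ->]; case/setUP=> /imsetP[b bY ->] /= eq_ab.
  + by rewrite (finj a b).
  + by move: (fY a aX); rewrite eq_ab (disjointFl dY bY).
  + by move: (fY b bY); rewrite -eq_ab (disjointFl dY aX).
  + by rewrite eq_ab.
Qed.

Lemma card_graph_join : #|graph_join| = #|X1| + #|Y2|.
Proof.
have [_ gX _] := gM.
have dXY : [disjoint [set (a, f a) | a in X1] & [set (g b, b) | b in Y2]].
  rewrite -setI_eq0; apply/eqP/setP => p; rewrite !inE; apply/negbTE/andP.
  case=> /imsetP[a aX ->] /imsetP[b bY [eq_ab _]].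
  by move: (gX b bY); rewrite -eq_ab (disjointFr dX aX).
by rewrite cardsU_disjoint // !card_imset // => a b [].
Qed.
End GraphJoin.

Local Notation N := (neighbours E setT).

(* [(~: S, N S)] is a vertex cover of size [#|A| + #|B| - cover_saving S]. *)
Definition cover_saving S : nat := #|S| + #|~: N S|.

Section MaxSaving.
Variable S : {set A}.
Hypothesis S_max : forall T, cover_saving T <= cover_saving S.

Lemma hall_condition_outside : hall_condition E (~: S) (~: N S).
Proof.
move=> T sTS; have := S_max (S :|: T); rewrite /cover_saving.
have dST : [disjoint S & T] by rewrite disjoint_sym disjoints_subset.
have NST : #|N (S :|: T)| <= #|neighbours E (~: N S) T| + #|N S|.
  rewrite neighboursU; apply: leq_trans (leq_card_setU _ _).1.
  by apply: subset_leq_card; rewrite subUset subsetUr -setTD neighbours_setD.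
have := cardsC (N S); have := cardsC (N (S :|: T)).
rewrite cardsU_disjoint //; lia.
Qed.

Lemma hall_condition_inside : hall_condition (fun b a => E a b) (N S) S.
Proof.
move=> R sRNS; set SR := neighbours _ S R; have := S_max (S :\: SR).
have sSRS : SR \subset S by apply: neighbours_subset.
have dNR : [disjoint N (S :\: SR) & R].
  rewrite -setI_eq0; apply/eqP/setP => b; rewrite !inE; apply/negbTE/andP.
  case=> /exists_inP[a]; rewrite inE => /andP[aSR aS] Eab bR.
  by case/negP: aSR; rewrite inE aS; apply/exists_inP; exists b.
have NR : #|N (S :\: SR)| + #|R| <= #|N S|.
  rewrite -cardsU_disjoint //; apply: subset_leq_card; rewrite subUset sRNS andbT.
  apply/subsetP => b; rewrite !inE => /exists_inP[a aSSR Eab].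
  by apply/exists_inP; exists a; rewrite // (subsetP (subsetDl S SR)).
rewrite /cover_saving cardsD (setIidPr sSRS).
have := subset_leq_card sSRS; have := cardsC (N S).
by have := cardsC (N (S :\: SR)); lia.
Qed.

End MaxSaving.

Lemma konig : exists WA WB M,
  [/\ vertex_cover WA WB, matching M & #|M| = #|WA| + #|WB|].
Proof.
(* Hall's theorem needs default elements; without them [E] is empty. *)
have [[a0 b0] _|AB0] := pickP (@predT (A * B)); last first.
  exists set0, set0, set0; split; last by rewrite !cards0.
  - by move=> a b _; have := AB0 (a, b).
  - by split=> [p|p q|p q]; rewrite inE.
pose S := [arg max_(S > set0) cover_saving S].
have S_max T : cover_saving T <= cover_saving S.
  by rewrite /S; case: arg_maxnP => // S' _; apply.
have [f fM] := hall b0 (hall_condition_outside S_max).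
have [g gM] := hall a0 (hall_condition_inside S_max).
have dS : [disjoint ~: S & S] by rewrite disjoints_subset.
have dNS : [disjoint ~: N S & N S] by rewrite disjoints_subset.
exists (~: S), (N S), (graph_join (~: S) (N S) f g); split.
- move=> a b Eab; rewrite inE; case: (boolP (a \in S)) => //= aS.
  by rewrite !inE; apply/exists_inP; exists a.
- exact: matching_graph_join dS dNS fM gM.
- exact: card_graph_join dS gM.
Qed.
End Konig.

(** * Two-covers of H(Y) *)

Section HY.
Variables (m n : nat).
Local Notation V := (vert m n).

Lemma cs_pair_inj (j j' k k' : 'I_n) :
  [set cv m j; sv m k] = [set cv m j'; sv m k'] -> j = j' /\ k = k'.
Proof.
move=> e.
have : cv m j \in [set cv m j'; sv m k'] by rewrite -e set21.
have : sv m k \in [set cv m j'; sv m k'] by rewrite -e set22.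
by rewrite !inE /cv /sv => /orP[/eqP[] //|/eqP[] ->] /orP[/eqP[] -> //|/eqP[] //].
Qed.

Lemma cs_pairs_disjoint (j j' k k' : 'I_n) :
  j != j' -> k != k' -> [disjoint [set cv m j; sv m k] & [set cv m j'; sv m k']].
Proof.
move=> nj nk; rewrite -setI_eq0; apply/eqP/setP => v; rewrite !inE.
apply/negbTE/negP => /andP[/orP[]/eqP-> /orP[]/eqP[]] /eqP //.
- by rewrite (negbTE nj).
- by rewrite (negbTE nk).
Qed.

Definition bip_rel (l : nat) (Q : {set {set V}}) (j k : 'I_n) : bool :=
  [&& j < l, k < l & [set cv m j; sv m k] \notin Q].

Lemma bip_edgesP l Q p :
  reflect (exists j k, bip_rel l Q j k /\ p = [set cv m j; sv m k])
          (p \in bip_edges l Q).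
Proof.
rewrite !inE; apply: (iffP andP) => [[pQ /existsP[j /existsP[k]]]|[j [k []]]].
  by case/and3P=> jl kl /eqP p_jk; exists j, k; rewrite /bip_rel jl kl -p_jk.
case/and3P=> jl kl jkQ ->; split=> //.
by apply/existsP; exists j; apply/existsP; exists k; rewrite jl kl eqxx.
Qed.

(* [inl j] stands for c_j and [inr k] for s_k, so [inr w : V] is the vertex
   itself. *)
Definition bip_cover (l : nat) (Q : {set {set V}}) (W : {set 'I_n + 'I_n}) :=
  forall j k, bip_rel l Q j k -> (inl j \in W) || (inr k \in W).

Lemma nu_le_cover l Q W : bip_cover l Q W -> nu m n l Q <= #|W|.
Proof.
move=> coverW; apply/bigmax_leqP => M /andP[sME /forall_inP dM].
apply: leq_trans (leq_imset_card (@inr 'I_m _) W).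
apply: card_disjoint_family_le => [e f eM fM neq_ef|e eM].
  by move/forall_inP/(_ f fM)/implyP/(_ neq_ef): (dM e eM).
have /bip_edgesP[j [k [jk ->]]] := subsetP sME e eM.
apply/set0Pn; case/orP: (coverW j k jk) => [jW|kW].
- by exists (cv m j); rewrite !inE eqxx (imset_f _ jW).
- by exists (sv m k); rewrite !inE eqxx (imset_f _ kW) orbT.
Qed.

Lemma matching_le_nu l Q (M : {set 'I_n * 'I_n}) :
  matching (bip_rel l Q) M -> #|M| <= nu m n l Q.
Proof.
case=> ME fst_inj snd_inj; pose pair (p : 'I_n * 'I_n) := [set cv m p.1; sv m p.2].
have pair_inj : injective pair.
  by move=> [j k] [j' k'] /cs_pair_inj[/= -> ->].
rewrite -(card_imset M pair_inj); apply: leq_bigmax_cond; apply/andP; split.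
  apply/subsetP => _ /imsetP[p pM ->]; apply/bip_edgesP.
  by exists p.1, p.2; split; first exact: ME.
apply/forall_inP => _ /imsetP[p pM ->]; apply/forall_inP => _ /imsetP[q qM ->].
apply/implyP => neq_pq; apply: cs_pairs_disjoint.
- by apply: contraNneq neq_pq => /fst_inj-> //.
- by apply: contraNneq neq_pq => /snd_inj-> //.
Qed.

Lemma nu_vertex_cover l Q : exists2 W, bip_cover l Q W & #|W| = nu m n l Q.
Proof.
have [WA [WB [M [coverW matchM cardM]]]] := konig (bip_rel l Q).
pose W := inl @: WA :|: inr @: WB.
have coverW' : bip_cover l Q W.
  move=> j k /coverW /orP[jA|kB]; rewrite !inE.
  - by rewrite (imset_f _ jA).
  - by rewrite (imset_f _ kB) !orbT.
exists W; first exact: coverW'.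
apply/eqP; rewrite eqn_leq nu_le_cover // andbT.
apply: leq_trans (leq_card_setU _ _).1 _.
rewrite (leq_trans _ (matching_le_nu matchM)) // cardM.
by rewrite leq_add ?leq_imset_card.
Qed.

Lemma r_pair_inj (i i' : 'I_m) (u u' : 'I_n + 'I_n) :
  [set rv n i; inr u] = [set rv n i'; inr u'] -> i = i' /\ u = u'.
Proof.
move=> e.
have /set2P[[->]|/eqP//] : rv n i \in [set rv n i'; inr u'] by rewrite -e set21.
have /set2P[/eqP//|[->]] // : (inr u : V) \in [set rv n i'; inr u'].
by rewrite -e set22.
Qed.

Definition spokes (W : 'I_m -> {set 'I_n + 'I_n}) : {set {set V}} :=
  \bigcup_(i < m) [set [set rv n i; inr u] | u in W i].

Lemma card_spokes W : #|spokes W| = \sum_(i < m) #|W i|.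
Proof.
rewrite -sum1_card partition_disjoint_bigcup => [|i i' neq_ii'].
  apply: eq_bigr => i _; rewrite sum1_card card_imset // => u u'.
  by case/r_pair_inj.
rewrite -setI_eq0; apply/eqP/setP => p; rewrite !inE; apply/negbTE/andP.
case=> /imsetP[u _ ->] /imsetP[u' _ /r_pair_inj[eq_ii' _]].
by rewrite eq_ii' eqxx in neq_ii'.
Qed.

Lemma spokes_disjoint_CxS W : [disjoint spokes W & CxS m n].
Proof.
rewrite -setI_eq0; apply/eqP/setP => p; rewrite !inE; apply/negbTE/andP.
case=> /bigcupP[i _ /imsetP[u _ ->]] /existsP[j /existsP[k /eqP e]].
by have := set21 (rv n i) (inr u : V); rewrite e !inE.
Qed.

Lemma two_cover_spokes (a : 'I_m -> nat) (Q : {set {set V}}) W :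
  Q \subset CxS m n -> (forall i, bip_cover (a i) Q (W i)) ->
  two_cover m n a (Q :|: spokes W).
Proof.
move=> sQC coverW; apply/andP; split.
  apply/forall_inP => p /setUP[/(subsetP sQC)|/bigcupP[i _ /imsetP[u _ ->]]].
    by rewrite inE => /existsP[j /existsP[k /eqP->]]; rewrite cards2.
  by rewrite cards2.
apply/forallP => e; apply/implyP.
case/existsP=> i /existsP[j /existsP[k /and3P[ji ki /eqP->]]].
have [jkQ|jkQ] := boolP ([set cv m j; sv m k] \in Q).
  apply/exists_inP; exists [set cv m j; sv m k]; first by rewrite inE jkQ.
  by apply/subsetP => v; rewrite !inE => /orP[]->; rewrite ?orbT.
have /orP[jW|kW] : (inl j \in W i) || (inr k \in W i).
  by apply: coverW; rewrite /bip_rel ji ki jkQ.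
- apply/exists_inP; exists [set rv n i; cv m j].
    by rewrite inE; apply/orP; right; apply/bigcupP; exists i => //; apply: imset_f.
  by apply/subsetP => v; rewrite !inE => /orP[]->; rewrite ?orbT.
- apply/exists_inP; exists [set rv n i; sv m k].
    by rewrite inE; apply/orP; right; apply/bigcupP; exists i => //; apply: imset_f.
  by apply/subsetP => v; rewrite !inE => /orP[]->; rewrite ?orbT.
Qed.

Lemma tau2_le_card (a : 'I_m -> nat) P : two_cover m n a P -> tau2 m n a <= #|P|.
Proof. exact: bigminn_le_cond. Qed.
End HY.

Theorem corollary1 (m : nat) (a : 'I_m -> nat)
  (Ha : forall i j : 'I_m, i <= j -> a j <= a i)
  (Q : {set {set vert m (a1 a)}})
  (HQ : Q \subset CxS m (a1 a)) :
  exists P : {set {set vert m (a1 a)}},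
    [/\ two_cover m (a1 a) a P,
        P :&: CxS m (a1 a) = Q,
        tau2 m (a1 a) a <= #|P|
      & #|P| = #|Q| + \sum_(i < m) nu m (a1 a) (a i) Q].
Proof.
have [W coverW cardW] := fin_all_exists2 (fun i => nu_vertex_cover (a i) Q).
have P_cover := two_cover_spokes HQ coverW.
have dQ : [disjoint Q & spokes W].
  by rewrite disjoint_sym (disjointWr HQ) ?spokes_disjoint_CxS.
exists (Q :|: spokes W); split => //.
- by rewrite setIUl (setIidPl HQ) (disjoint_setI0 (spokes_disjoint_CxS W)) setU0.
- exact: tau2_le_card.
- rewrite cardsU_disjoint // card_spokes; congr (_ + _).
  by apply: eq_bigr => i _; rewrite cardW.
Qed.
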